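(* For every formula $\varphi$ of $\mathcal L^{\bigcirc}_\square$ the following are equivalent: (i) $\varphi$ is derivable in $\mathbf{K4H}$; (ii) $\varphi$ is valid on every finite invertible dynamic $\mathbf{K4}$ frame; (iii) $\varphi$ is valid, with respect to the $d$-semantics, on every invertible dynamic topological system $\langle X,\tau,f\rangle$ whose underlying space is $T_D$.
   Context: Language $\mathcal L^{\bigcirc}_\square$: $\varphi::= p\mid \varphi\wedge\varphi\mid\neg\varphi\mid\square\varphi\mid\bigcirc\varphi$, $p$ ranging over a fixed non-empty set $\mathsf{PV}$. Axioms and rules: Taut; K: $\square(\varphi\to\psi)\to(\square\varphi\to\square\psi)$; 4: $\square\varphi\to\square\square\varphi$; ${\rm Next}_\neg$: $\neg\bigcirc\varphi\leftrightarrow\bigcirc\neg\varphi$; ${\rm Next}_\wedge$: $\bigcirc(\varphi\wedge\psi)\leftrightarrow\bigcirc\varphi\wedge\bigcirc\psi$; H: $\square\bigcirc\varphi\leftrightarrow\bigcirc\square\varphi$; rules modus ponens, ${\rm Nec}_\square$, ${\rm Nec}_\bigcirc$. $\mathbf{K4H}$ is axiomatised by Taut, K, 4, ${\rm Next}_\neg$, ${\rm Next}_\wedge$, H, closed under these rules. An invertible dynamic $\mathbf{K4}$ frame is $\langle W,\sqsubset,f\rangle$ with $W$ non-empty, $\sqsubset$ transitive, and $f\colon W\to W$ a bijection such that $w\sqsubset v$ iff $f(w)\sqsubset f(v)$. Kripke truth: $w\models\square\varphi$ iff $v\models\varphi$ for all $v$ with $w\sqsubset v$; $w\models\bigcirc\varphi$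 iff $f(w)\models\varphi$. A $T_D$ space is one in which every singleton is the intersection of an open and a closed set. An invertible DTS is $\langle X,\tau,f\rangle$ with $f$ a homeomorphism of $X$. $d$-semantics: with $d(A)$ the set of $x$ in the closure of $A\setminus\{x\}$, $\|p\|=\nu(p)$, Boolean clauses set-theoretic, $\|\square\varphi\|=X\setminus d(\|\neg\varphi\|)$, $\|\bigcirc\varphi\|=f^{-1}(\|\varphi\|)$. Validity means truth everywhere under every valuation. *)

From HB Require Import structures.
From mathcomp Require Import all_boot all_order.
From mathcomp Require Import all_classical topology.
Set Implicit Arguments. Unset Strict Implicit. Unset Printing Implicit Defensive.
Local Open Scope classical_set_scope.

Inductive form : Type :=
| Var : nat -> form
| And : form -> form -> form
| Neg : form -> form
| Box : form -> form
| Next : form -> form.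

Definition Imp (a b : form) : form := Neg (And a (Neg b)).
Definition Iff (a b : form) : form := And (Imp a b) (Imp b a).

(* Propositional tautologies: true under every Boolean assignment to the
   propositional atoms (variables) and to modal subformulas [] a, O a. *)
Fixpoint taut_eval (v : form -> bool) (a : form) : bool :=
  match a with
  | Var _ => v a
  | And b c => taut_eval v b && taut_eval v c
  | Neg b => ~~ taut_eval v b
  | Box _ => v a
  | Next _ => v a
  end.

Definition Taut (a : form) : Prop := forall v : form -> bool, taut_eval v a.

Inductive K4H : form -> Prop :=
| K4H_taut a : Taut a -> K4H a
| K4H_K a b : K4H (Imp (Box (Imp a b)) (Imp (Box a) (Box b)))
| K4H_4 a : K4H (Imp (Box a) (Box (Box a)))
| K4H_NextNeg a : K4H (Iff (Neg (Next a)) (Next (Neg a)))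
| K4H_NextAnd a b : K4H (Iff (Next (And a b)) (And (Next a) (Next b)))
| K4H_H a : K4H (Iff (Box (Next a)) (Next (Box a)))
| K4H_mp a b : K4H (Imp a b) -> K4H a -> K4H b
| K4H_necBox a : K4H a -> K4H (Box a)
| K4H_necNext a : K4H a -> K4H (Next a).

Definition inv_dyn_K4_frame (W : Type) (R : W -> W -> Prop) (f : W -> W) : Prop :=
  inhabited W /\
  (forall u v w, R u v -> R v w -> R u w) /\
  bijective f /\
  (forall w v, R w v <-> R (f w) (f v)).

Fixpoint kripke_sat (W : Type) (R : W -> W -> Prop) (f : W -> W)
    (V : nat -> W -> Prop) (w : W) (a : form) : Prop :=
  match a with
  | Var p => V p w
  | And b c => kripke_sat R f V w b /\ kripke_sat R f V w c
  | Neg b => ~ kripke_sat R f V w b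
  | Box b => forall v, R w v -> kripke_sat R f V v b
  | Next b => kripke_sat R f V (f w) b
  end.

Definition kripke_valid (W : Type) (R : W -> W -> Prop) (f : W -> W) (a : form) : Prop :=
  forall (V : nat -> W -> Prop) (w : W), kripke_sat R f V w a.

Definition T_D_space (X : topologicalType) : Prop :=
  forall x : X, exists U C : set X, open U /\ closed C /\ [set x] = U `&` C.

Definition homeomorphism (X : topologicalType) (f : X -> X) : Prop :=
  exists g : X -> X, [/\ cancel f g, cancel g f, continuous f & continuous g].

Definition dset (X : topologicalType) (A : set X) : set X :=
  [set x | closure (A `\ x) x].

Fixpoint dsem (X : topologicalType) (f : X -> X) (nu : nat -> set X) (a : form)
    : set X :=
  match a with
  | Var p => nu p
  | And b c => dsem f nu b `&` dsem f nu c
  | Neg b => ~` dsem f nu b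
  | Box b => ~` dset (~` dsem f nu b)
  | Next b => f @^-1` dsem f nu b
  end.

Definition d_valid (X : topologicalType) (f : X -> X) (a : form) : Prop :=
  forall nu : nat -> set X, dsem f nu a = setT.

From HB Require Import structures.
From mathcomp Require Import all_boot all_order.
From mathcomp Require Import all_classical topology.
Local Open Scope classical_set_scope.

(* Soundness for the d-semantics rests on two facts about the derived-set
   operator: it commutes with preimages under a homeomorphism (axiom H), and
   d(d A) is included in d A in a T_D space (axiom 4).
   For completeness, Next_neg, Next_and and H push every Next down to the
   variables, so a formula is K4H-equivalent to one built from the atoms
   Next^k p by Boolean connectives and boxes alone.  The finite canonical K4
   model over the subformulas of this normal form, repeated in N+1 copies
   (N the Next-depth) that f permutes cyclically, is a finite invertible
   dynamic K4 frame refuting every non-theorem.  Finally a finite frame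
   (W, R, f) becomes a T_D space on W * nat in which the basic neighbourhoods
   of (w, n) are {(w, n)} together with R[w] * [k, oo); the second coordinate
   supplies points distinct from (w, n) above every R-successor of w, so that
   the topological box agrees with the Kripke box. *)

Ltac decide_taut :=
  let v := fresh "v" in
  move=> v /=;
  repeat match goal with
  | |- context [taut_eval v ?x] => case: (taut_eval v x)
  | |- context [v ?x] => case: (v x)
  end; done.

Lemma K4H_mp_taut {a c} : K4H a -> Taut (Imp a c) -> K4H c.
Proof. by move=> ha ht; apply: K4H_mp (K4H_taut ht) ha. Qed.

Lemma K4H_mp2_taut {a b c} : K4H a -> K4H b -> Taut (Imp a (Imp b c)) -> K4H c.
Proof. by move=> ha hb ht; apply: K4H_mp (K4H_mp (K4H_taut ht) ha) hb. Qed.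

Lemma K4H_mp3_taut {a b c d} :
  K4H a -> K4H b -> K4H c -> Taut (Imp a (Imp b (Imp c d))) -> K4H d.
Proof.
by move=> ha hb hc ht; apply: K4H_mp (K4H_mp (K4H_mp (K4H_taut ht) ha) hb) hc.
Qed.

Lemma K4H_Next_imp a b : K4H (Imp (Next (Imp a b)) (Imp (Next a) (Next b))).
Proof.
apply: (K4H_mp3_taut (K4H_NextNeg (And a (Neg b))) (K4H_NextAnd a (Neg b))
  (K4H_NextNeg b)).
by decide_taut.
Qed.

Lemma K4H_Next_cong {a b} : K4H (Iff a b) -> K4H (Iff (Next a) (Next b)).
Proof.
move=> /K4H_necNext hab; have hNext := K4H_NextAnd (Imp a b) (Imp b a).
have hl : K4H (Next (Imp a b)) by apply: (K4H_mp2_taut hab hNext); decide_taut.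
have hr : K4H (Next (Imp b a)) by apply: (K4H_mp2_taut hab hNext); decide_taut.
apply: (K4H_mp2_taut (K4H_mp (K4H_Next_imp a b) hl) (K4H_mp (K4H_Next_imp b a) hr)).
by decide_taut.
Qed.

Lemma K4H_Box_mono {a b} : K4H (Imp a b) -> K4H (Imp (Box a) (Box b)).
Proof. by move=> h; apply: K4H_mp (K4H_K a b) (K4H_necBox h). Qed.

Lemma K4H_Box_cong {a b} : K4H (Iff a b) -> K4H (Iff (Box a) (Box b)).
Proof.
move=> h; have hl : K4H (Imp a b) by apply: (K4H_mp_taut h); decide_taut.
have hr : K4H (Imp b a) by apply: (K4H_mp_taut h); decide_taut.
by apply: (K4H_mp2_taut (K4H_Box_mono hl) (K4H_Box_mono hr)); decide_taut.
Qed.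

Lemma K4H_Box_and a b : K4H (Imp (And (Box a) (Box b)) (Box (And a b))).
Proof.
have hab : K4H (Imp a (Imp b (And a b))) by apply: K4H_taut; decide_taut.
apply: (K4H_mp2_taut (K4H_Box_mono hab) (K4H_K b (And a b))).
by decide_taut.
Qed.

Definition nexts (k : nat) (a : form) : form := iter k Next a.

Lemma K4H_nexts_Neg k a : K4H (Iff (nexts k (Neg a)) (Neg (nexts k a))).
Proof.
elim: k => [|k IH]; first by apply: K4H_taut; decide_taut.
by apply: (K4H_mp2_taut (K4H_Next_cong IH) (K4H_NextNeg (nexts k a))); decide_taut.
Qed.

Lemma K4H_nexts_And k a b :
  K4H (Iff (nexts k (And a b)) (And (nexts k a) (nexts k b))).
Proof.
elim: k => [|k IH]; first by apply: K4H_taut; decide_taut.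
apply: (K4H_mp2_taut (K4H_Next_cong IH) (K4H_NextAnd (nexts k a) (nexts k b))).
by decide_taut.
Qed.

Lemma K4H_nexts_Box k a : K4H (Iff (nexts k (Box a)) (Box (nexts k a))).
Proof.
elim: k => [|k IH]; first by apply: K4H_taut; decide_taut.
by apply: (K4H_mp2_taut (K4H_Next_cong IH) (K4H_H (nexts k a))); decide_taut.
Qed.

Fixpoint push_next (k : nat) (a : form) : form :=
  match a with
  | Var p => nexts k (Var p)
  | And b c => And (push_next k b) (push_next k c)
  | Neg b => Neg (push_next k b)
  | Box b => Box (push_next k b)
  | Next b => push_next k.+1 b
  end.

Lemma K4H_push_next a k : K4H (Iff (nexts k a) (push_next k a)).
Proof.
elim: a k => [p|a IHa b IHb|a IHa|a IHa|a IHa] k /=.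
- by apply: K4H_taut; decide_taut.
- by apply: (K4H_mp3_taut (K4H_nexts_And k a b) (IHa k) (IHb k)); decide_taut.
- by apply: (K4H_mp2_taut (K4H_nexts_Neg k a) (IHa k)); decide_taut.
- by apply: (K4H_mp2_taut (K4H_nexts_Box k a) (K4H_Box_cong (IHa k))); decide_taut.
- by have := IHa k.+1; rewrite /nexts iterSr.
Qed.

Inductive next_normal : form -> Prop :=
| NormalVar k p : next_normal (nexts k (Var p))
| NormalAnd a b : next_normal a -> next_normal b -> next_normal (And a b)
| NormalNeg a : next_normal a -> next_normal (Neg a)
| NormalBox a : next_normal a -> next_normal (Box a).

Lemma push_next_normal a k : next_normal (push_next k a).
Proof.
elim: a k => [p|a IHa b IHb|a IHa|a IHa|a IHa] k /=.
- exact: NormalVar.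
- exact: NormalAnd.
- exact: NormalNeg.
- exact: NormalBox.
- exact: IHa.
Qed.

Section KripkeSemantics.
Context {W : Type} {R : W -> W -> Prop} {f : W -> W} {V : nat -> W -> Prop}.

Lemma kripke_sat_Imp w a b :
  kripke_sat R f V w (Imp a b) <-> (kripke_sat R f V w a -> kripke_sat R f V w b).
Proof.
split=> /= h; first by move=> ha; apply: contrapT => hb; apply: h.
by move=> [ha hb]; apply/hb/h.
Qed.

Lemma kripke_sat_Iff w a b :
  kripke_sat R f V w (Iff a b) <-> (kripke_sat R f V w a <-> kripke_sat R f V w b).
Proof.
split=> [[/kripke_sat_Imp h1 /kripke_sat_Imp h2]|[h1 h2]]; first by split.
by split; apply/kripke_sat_Imp.
Qed.

Lemma taut_eval_kripke_sat w a :
  taut_eval (fun x => `[< kripke_sat R f V w x >]) a = `[< kripke_sat R f V w a >].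
Proof.
elim: a => //= [a IHa b IHb|a IHa]; first by rewrite IHa IHb asbool_and.
by rewrite IHa asbool_neg.
Qed.

Lemma kripke_sat_nexts k w a :
  kripke_sat R f V w (nexts k a) = kripke_sat R f V (iter k f w) a.
Proof. by elim: k w => [//|k IH] w; rewrite iterSr -IH. Qed.
End KripkeSemantics.

Theorem K4H_kripke_sound {W : Type} {R : W -> W -> Prop} {f : W -> W} :
  inv_dyn_K4_frame R f -> forall a, K4H a -> kripke_valid R f a.
Proof.
move=> [_ [htr [[g fK gK] hR]]] a.
elim=> {a} [a ht|a b|a|a|a b|a|a b _ h1 _ h2|a _ h|a _ h] V w.
- have := ht (fun x => `[< kripke_sat R f V w x >]).
  by rewrite taut_eval_kripke_sat => /asboolP.
- apply/kripke_sat_Imp => hab; apply/kripke_sat_Imp => ha v hv.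
  by apply/kripke_sat_Imp: (ha v hv); exact: hab.
- by apply/kripke_sat_Imp => h v hv u hu; exact: h (htr _ _ _ hv hu).
- by apply/kripke_sat_Iff.
- by apply/kripke_sat_Iff.
- apply/kripke_sat_Iff; split=> /= h.
    by move=> u hu; rewrite -(gK u); apply: h; rewrite hR gK.
  by move=> v hv; apply: h; rewrite -hR.
- by move: (h1 V w) => /kripke_sat_Imp; apply.
- by move=> v _; apply: h.
- exact: h.
Qed.

Definition form_eq_dec : comparable form.
Proof. move=> a b; rewrite /decidable; decide equality; decide equality. Defined.
HB.instance Definition _ := comparableMixin form_eq_dec.

Definition Top : form := Neg (And (Var 0) (Neg (Var 0))).

Fixpoint bigAnd (G : seq form) : form :=
  if G is x :: G' then And x (bigAnd G') else Top.

Definition consistent (G : seq form) : Prop := ~ K4H (Neg (bigAnd G)).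

Lemma K4H_bigAnd_mem {G x} : x \in G -> K4H (Imp (bigAnd G) x).
Proof.
elim: G => [//|y G IH]; rewrite inE => /orP [/eqP ->|/IH h] /=.
  by apply: K4H_taut; decide_taut.
by apply: (K4H_mp_taut h); decide_taut.
Qed.

Lemma K4H_bigAnd_sub {G G'} : {subset G' <= G} -> K4H (Imp (bigAnd G) (bigAnd G')).
Proof.
elim: G' => [|y G' IH] hs /=; first by apply: K4H_taut; decide_taut.
have hy := K4H_bigAnd_mem (hs y (mem_head _ _)).
have hG' : K4H (Imp (bigAnd G) (bigAnd G')).
  by apply: IH => z hz; apply: hs; rewrite inE hz orbT.
by apply: (K4H_mp2_taut hy hG'); decide_taut.
Qed.

Lemma consistent_sub {G G'} : {subset G' <= G} -> consistent G -> consistent G'.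
Proof.
move=> hs hG hG'; apply: hG.
by apply: (K4H_mp2_taut (K4H_bigAnd_sub hs) hG'); decide_taut.
Qed.

Lemma inconsistent_taut {G G'} :
  {subset G' <= G} -> Taut (Neg (bigAnd G')) -> ~ consistent G.
Proof. by move=> hs ht /(consistent_sub hs); apply; apply: K4H_taut. Qed.

Lemma inconsistent_neg {G a} : a \in G -> Neg a \in G -> ~ consistent G.
Proof.
move=> ha hna; apply: (inconsistent_taut (G' := [:: a; Neg a])); last by decide_taut.
by move=> x; rewrite !inE => /orP[]/eqP->.
Qed.

Lemma consistent_cons_or_neg {G} a :
  consistent G -> consistent (a :: G) \/ consistent (Neg a :: G).
Proof.
move=> hG; case: (pselect (consistent (a :: G))) => [|ha]; [by left|right] => hna.
apply: hG; have {}ha : K4H (Neg (And a (bigAnd G))) by apply: contrapT.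
by apply: (K4H_mp2_taut ha hna); decide_taut.
Qed.

(* Worlds of the canonical model are Boolean vectors [t] over the list [S] of
   subformulas, standing for the set [literals S t]. *)
Definition literal (x : form * bool) : form := if x.2 then x.1 else Neg x.1.
Definition literals (S : seq form) (t : seq bool) : seq form := map literal (zip S t).

Lemma literals_decide {S t x} : size t = size S -> x \in S ->
  x \in literals S t \/ Neg x \in literals S t.
Proof.
elim: S t => [//|y S IH] [//|b t] /= [hs]; rewrite inE => /orP [/eqP ->|hx].
  by case: b; [left|right]; rewrite mem_head.
by case: (IH t hs hx) => h; [left|right]; rewrite inE h orbT.
Qed.

Lemma literals_Box {S t b} : Box b \in literals S t -> Box b \in S.
Proof.
elim: S t => [|y S IH] [|c t] //=; rewrite inE => /orP [/eqP h|h].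
- by case: c h => //= ->; rewrite mem_head.
- by rewrite inE (IH t h) orbT.
Qed.

Lemma lindenbaum (L : seq form) {D : seq form} : consistent D ->
  exists2 t : seq bool, size t = size L & consistent (literals L t ++ D).
Proof.
elim: L D => [|a L IH] D hD; first by exists [::].
have [b hb] : exists b, consistent (literal (a, b) :: D).
  by case: (consistent_cons_or_neg a hD); [exists true|exists false].
have [t hs ht] := IH _ hb; exists (b :: t); first by rewrite /= hs.
apply: consistent_sub ht => x; rewrite /literals /= inE !mem_cat inE.
by case/orP=> [->|/orP[->|->]]; rewrite ?orbT.
Qed.

Lemma lindenbaum_tuple (S : seq form) {D : seq form} : consistent D ->
  exists t : (size S).-tuple bool, consistent (literals S t ++ D).
Proof.
by move=> /(lindenbaum S) [t /eqP hs ht]; exists (Tuple hs).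
Qed.

Section Literals.
Context {S : seq form} {t : (size S).-tuple bool} {D : seq form}.

Lemma literals_of_cat : consistent (literals S t ++ D) -> consistent (literals S t).
Proof. by apply: consistent_sub => x hx; rewrite mem_cat hx. Qed.

Lemma literals_mem_of_cat {x} : consistent (literals S t ++ D) ->
  x \in D -> x \in S -> x \in literals S t.
Proof.
move=> ht hxD hxS; case: (literals_decide (size_tuple t) hxS) => // hn.
exfalso; apply: (inconsistent_neg (a := x) _ _ ht);
  by rewrite mem_cat ?hxD ?hn ?orbT.
Qed.

Hypothesis t_consistent : consistent (literals S t).

Lemma literals_Neg {x} : x \in S -> (Neg x \in literals S t <-> ~ x \in literals S t).
Proof.
move=> hx; split=> [hn hp|hn]; first exact: inconsistent_neg hp hn t_consistent.
by case: (literals_decide (size_tuple t) hx).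
Qed.

Lemma literals_And {a b} : a \in S -> b \in S -> And a b \in S ->
  (And a b \in literals S t <-> a \in literals S t /\ b \in literals S t).
Proof.
move=> ha hb hab; split=> [h|[h1 h2]].
  split; apply: contrapT.
  - move=> /(literals_Neg ha).2 hn.
    apply: (inconsistent_taut (G' := [:: And a b; Neg a]) _ _ t_consistent).
      by move=> x; rewrite !inE => /orP[]/eqP->.
    by decide_taut.
  - move=> /(literals_Neg hb).2 hn.
    apply: (inconsistent_taut (G' := [:: And a b; Neg b]) _ _ t_consistent).
      by move=> x; rewrite !inE => /orP[]/eqP->.
    by decide_taut.
apply: contrapT => /(literals_Neg hab).2 hn.
apply: (inconsistent_taut (G' := [:: a; b; Neg (And a b)]) _ _ t_consistent).
  by move=> x; rewrite !inE => /or3P[]/eqP->.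
by decide_taut.
Qed.
End Literals.

Fixpoint subformulas (a : form) : seq form :=
  match a with
  | Var p => [:: a]
  | And b c => a :: subformulas b ++ subformulas c
  | Neg b => a :: subformulas b
  | Box b => a :: subformulas b
  | Next b => a :: subformulas b
  end.

Lemma subformulas_refl a : a \in subformulas a.
Proof. by case: a => *; rewrite mem_head. Qed.

Lemma subformulas_trans {a b c} :
  b \in subformulas a -> c \in subformulas b -> c \in subformulas a.
Proof.
elim: a => [p|a IHa a' IHa'|a IHa|a IHa|a IHa] /=.
- by rewrite inE => /eqP ->.
- rewrite inE mem_cat => /orP [/eqP ->|/orP [h|h]] hc //.
  + by rewrite inE mem_cat (IHa h hc) orbT.
  + by rewrite inE mem_cat (IHa' h hc) !orbT.
all: by rewrite inE => /orP [/eqP ->|h] hc //; rewrite inE (IHa h hc) orbT.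
Qed.

Lemma subformulas_And {a b c} :
  And b c \in subformulas a -> b \in subformulas a /\ c \in subformulas a.
Proof.
move=> h; split; apply: (subformulas_trans h);
  by rewrite /= inE mem_cat subformulas_refl ?orbT.
Qed.

Lemma subformulas_Neg {a b} : Neg b \in subformulas a -> b \in subformulas a.
Proof. by move/subformulas_trans; apply; rewrite /= inE subformulas_refl orbT. Qed.

Lemma subformulas_Box {a b} : Box b \in subformulas a -> b \in subformulas a.
Proof. by move/subformulas_trans; apply; rewrite /= inE subformulas_refl orbT. Qed.

Fixpoint next_depth (a : form) : nat :=
  match a with
  | Var _ => 0
  | And b c => maxn (next_depth b) (next_depth c)
  | Neg b | Box b => next_depth b
  | Next b => (next_depth b).+1
  end.

Lemma nexts_Var_inj {k m p q} : nexts k (Var p) = nexts m (Var q) -> k = m.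
Proof. by elim: k m => [|k IH] [|m] //= [/IH ->]. Qed.

Lemma subformulas_nexts_Var {k j p q} :
  nexts k (Var p) \in subformulas (nexts j (Var q)) -> (k <= j)%N.
Proof.
elim: j => [|j IH] /=; first by rewrite inE; case: k.
rewrite inE => /orP [/eqP /(nexts_Var_inj (m := j.+1)) ->//|/IH].
exact: leqW.
Qed.

Lemma subformulas_push_next {a j k p} :
  nexts k (Var p) \in subformulas (push_next j a) -> (k <= j + next_depth a)%N.
Proof.
elim: a j => [q|a IHa b IHb|a IHa|a IHa|a IHa] j /=.
- by move/subformulas_nexts_Var; rewrite addn0.
- rewrite inE mem_cat => /orP [/eqP h|/orP [/IHa|/IHb] h]; first by case: (k) h.
  + by apply: leq_trans h _; rewrite leq_add2l leq_maxl.
  + by apply: leq_trans h _; rewrite leq_add2l leq_maxr.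
- by rewrite inE => /orP [/eqP h|/IHa //]; case: (k) h.
- by rewrite inE => /orP [/eqP h|/IHa //]; case: (k) h.
- by move/IHa; rewrite addSnnS.
Qed.

Definition unbox (G : seq form) : seq form :=
  flatten [seq (if x is Box b then [:: b; Box b] else [::]) | x <- G].

Definition boxed (G : seq form) : seq form :=
  flatten [seq (if x is Box b then [:: Box b] else [::]) | x <- G].

Lemma boxed_sub G : {subset boxed G <= G}.
Proof.
elim: G => [//|y G IH] x /=; rewrite mem_cat => /orP [h|/IH h]; last first.
  by rewrite inE h orbT.
by case: y h => // b; rewrite inE => /eqP ->; rewrite mem_head.
Qed.

Lemma mem_unbox {G b} : Box b \in G -> (b \in unbox G) /\ (Box b \in unbox G).
Proof.
elim: G => [//|y G IH]; rewrite inE => /orP [/eqP <-|/IH [h1 h2]] /=.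
  by rewrite !mem_cat !inE !eqxx /= orbT.
by rewrite !mem_cat h1 h2 !orbT.
Qed.

(* Axiom 4 is what allows [Box b] to be passed on along with [b]. *)
Lemma K4H_boxed_unbox G : K4H (Imp (bigAnd (boxed G)) (Box (bigAnd (unbox G)))).
Proof.
elim: G => [|y G IH] /=.
  have hTop : K4H (Box Top) by apply/K4H_necBox/K4H_taut; decide_taut.
  by apply: (K4H_mp_taut hTop); decide_taut.
case: y => [p|a b|a|b|a] /=; try by apply: (K4H_mp_taut IH); decide_taut.
have h : K4H (Imp (And (Box b) (bigAnd (boxed G)))
                  (And (Box (Box b)) (Box (bigAnd (unbox G))))).
  by apply: (K4H_mp2_taut (K4H_4 b) IH); decide_taut.
apply: (K4H_mp3_taut (K4H_Box_and (Box b) (bigAnd (unbox G)))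
  (K4H_Box_and b (And (Box b) (bigAnd (unbox G)))) h).
by decide_taut.
Qed.

Lemma consistent_unbox {G a} :
  consistent G -> Neg (Box a) \in G -> consistent (Neg a :: unbox G).
Proof.
move=> hG hna hc; apply: hG.
have ha : K4H (Imp (bigAnd (unbox G)) a) by apply: (K4H_mp_taut hc); decide_taut.
have hbox := K4H_mp2_taut (K4H_boxed_unbox G) (K4H_Box_mono ha)
  (_ : Taut (Imp _ (Imp _ (Imp (bigAnd (boxed G)) (Box a))))).
apply: (K4H_mp3_taut (hbox _) (K4H_bigAnd_sub (boxed_sub G)) (K4H_bigAnd_mem hna)).
all: by decide_taut.
Qed.

Lemma val_iter_ordS n k : val (iter k (@ordS n.+1) ord0) = k %% n.+1.
Proof.
elim: k => [|k IH]; first by rewrite mod0n.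
by rewrite iterS /= IH -addn1 modnDml addn1.
Qed.

Section CanonicalModel.
Variable phi : form.
Let S := subformulas (push_next 0 phi).
Let N := next_depth phi.

(* The i-th of the N+1 copies reads [Next^i p] off the literals; evaluated at
   copy 0, [Next^k p] thus holds exactly when it belongs to the literals. *)
Definition canon_world := ((size S).-tuple bool * 'I_N.+1)%type.

Definition canon_succ (t u : seq bool) : Prop :=
  consistent (literals S u) /\
  forall b, Box b \in literals S t -> b \in literals S u /\ Box b \in literals S u.

Definition canon_rel (x y : canon_world) : Prop := x.2 = y.2 /\ canon_succ x.1 y.1.

Definition canon_next (x : canon_world) : canon_world := (x.1, ordS x.2).

Definition canon_val (p : nat) (x : canon_world) : Prop :=
  nexts x.2 (Var p) \in literals S x.1.

Lemma canon_frame : inv_dyn_K4_frame canon_rel canon_next.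
Proof.
split; first by constructor; exact: (nseq_tuple (size S) false, ord0).
split.
  move=> [t i] [u j] [s k] [/= -> [_ htu]] [/= -> [hs hus]].
  by split=> //; split=> // b /htu [_ /hus].
split.
  exists (fun x : canon_world => (x.1, ord_pred x.2)) => -[t i];
  by rewrite /canon_next /= ?ordSK ?ord_predK.
by move=> [t i] [u j]; split=> [[/= -> h]|[/= /ordS_inj -> h]].
Qed.

Lemma iter_canon_next k t i : iter k canon_next (t, i) = (t, iter k (@ordS N.+1) i).
Proof. by elim: k => [//|k IH]; rewrite !iterS IH. Qed.

Lemma canon_succ_witness {t : (size S).-tuple bool} {a} :
  consistent (literals S t) -> Neg (Box a) \in literals S t ->
  exists2 u : (size S).-tuple bool, canon_succ t u & ~ a \in literals S u.
Proof.
move=> ht hna; have [u hu] := lindenbaum_tuple S (consistent_unbox ht hna).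
exists u; last first.
  move=> ha; apply: (inconsistent_neg (a := a) _ _ hu);
  by rewrite mem_cat ?ha ?mem_head ?orbT.
split=> [|b hb]; first exact: literals_of_cat hu.
have [hb1 hb2] := mem_unbox hb; have hbS := literals_Box hb.
by split; apply: (literals_mem_of_cat hu);
  rewrite ?inE ?hb1 ?hb2 ?orbT ?(subformulas_Box hbS).
Qed.

Lemma canon_truth {chi} : next_normal chi -> chi \in S ->
  forall t : (size S).-tuple bool, consistent (literals S t) ->
  (kripke_sat canon_rel canon_next canon_val (t, ord0) chi <-> chi \in literals S t).
Proof.
elim=> {chi} [k p|a b _ IHa _ IHb|a _ IHa|a _ IHa] hin t ht.
- rewrite kripke_sat_nexts iter_canon_next /canon_val /= val_iter_ordS modn_small //.
  by rewrite ltnS; have := subformulas_push_next hin.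
- have [ha hb] := subformulas_And hin.
  by rewrite (literals_And ht ha hb hin) /= (IHa ha t ht) (IHb hb t ht).
- have ha := subformulas_Neg hin.
  by rewrite (literals_Neg ht ha) /= (IHa ha t ht).
- have ha := subformulas_Box hin; split=> /= h; last first.
    by move=> [u j] [/= <- [hu /(_ a h) [hau _]]]; apply/(IHa ha u hu).
  apply: contrapT => /(literals_Neg ht hin).2 hna.
  have [u [hu hbu] hau] := canon_succ_witness ht hna.
  by apply/hau/(IHa ha u hu); apply: h.
Qed.

Lemma K4H_canon_complete :
  kripke_valid canon_rel canon_next phi -> K4H phi.
Proof.
move=> hvalid; apply: contrapT => hn.
have hD : consistent [:: Neg (push_next 0 phi)].
  move=> hc; apply: hn; apply: (K4H_mp2_taut (K4H_push_next phi 0) hc).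
  by decide_taut.
have [t ht] := lindenbaum_tuple S hD.
have hsound := K4H_kripke_sound canon_frame _ (K4H_push_next phi 0) canon_val (t, ord0).
have := ((kripke_sat_Iff _ _ _).1 hsound).1 (hvalid canon_val (t, ord0)).
rewrite (canon_truth (push_next_normal phi 0) (subformulas_refl _) t
  (literals_of_cat ht)).
move=> hin; apply: (inconsistent_neg (a := push_next 0 phi) _ _ ht);
  by rewrite mem_cat ?hin ?mem_head ?orbT.
Qed.
End CanonicalModel.

Theorem K4H_complete_finite phi :
  (forall (W : finType) (R : W -> W -> Prop) (f : W -> W),
      inv_dyn_K4_frame R f -> kripke_valid R f phi) -> K4H phi.
Proof. by move=> h; apply: K4H_canon_complete; apply: h; exact: canon_frame. Qed.

Section DerivedSet.
Context {X : topologicalType}.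
Implicit Types A B : set X.

Lemma dsetS {A B} : A `<=` B -> dset A `<=` dset B.
Proof. by move=> hAB x; apply: closureS; apply: setSD. Qed.

Lemma dsetU A B : dset (A `|` B) `<=` dset A `|` dset B.
Proof. by move=> x; rewrite /dset /= setDUl closureU. Qed.

Lemma dset0 : dset (@set0 X) = set0.
Proof. by apply/seteqP; split=> // x /(_ setT filterT) [y [[]]]. Qed.

Lemma dset_dset_sub A : T_D_space X -> dset (dset A) `<=` dset A.
Proof.
move=> hTD x hx B hB; have [U [C [hU [hC hUC]]]] := hTD x.
have [hUx hCx] : U x /\ C x by rewrite -[_ /\ _]/((U `&` C) x) -hUC.
have : nbhs x (B `&` U) by apply: filterI hB (open_nbhs_nbhs (conj hU hUx)).
rewrite nbhsE => -[O [hO hOx] hOBU].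
have [y [[hdy hyx] hOy]] := hx O (open_nbhs_nbhs (conj hO hOx)).
(* [U `&` C = [set x]], so [O `\` C] is an open neighbourhood of [y]. *)
have hCy : ~ C y.
  by move=> hCy; apply: hyx; rewrite hUC; split=> //; case: (hOBU y hOy).
have hOC : open_nbhs y (O `&` ~` C) by split; [exact: openI (closed_openC hC)|].
have [z [[hAz hzy] [hOz hCz]]] := hdy _ (open_nbhs_nbhs hOC).
exists z; split; last by case: (hOBU z hOz).
by split=> // hzx; apply: hCz; rewrite hzx.
Qed.

Lemma preimage_closure (f : X -> X) A :
  homeomorphism f -> f @^-1` closure A = closure (f @^-1` A).
Proof.
move=> [g [fK gK hf hg]]; apply/seteqP; split=> x hx B hB.
- have hgB : nbhs (f x) (g @^-1` B) by apply: hg; rewrite fK.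
  by have [y [hAy hBy]] := hx _ hgB; exists (g y); rewrite /= gK.
- by have [y [hAy hBy]] := hx _ (hf x B hB); exists (f y).
Qed.

Lemma dset_preimage (f : X -> X) A :
  homeomorphism f -> f @^-1` dset A = dset (f @^-1` A).
Proof.
move=> hf; have [g [fK _ _ _]] := hf; apply/funext => x.
rewrite /dset /= -[closure _ (f x)]/((f @^-1` closure _) x) preimage_closure //.
congr (closure _ x); apply/seteqP; split=> y [hAy hyx]; split=> // hy; apply: hyx.
  by rewrite hy.
by rewrite -(fK y) hy fK.
Qed.
End DerivedSet.

Section DSemantics.
Context {X : topologicalType} {f : X -> X} {nu : nat -> set X}.

Lemma taut_eval_dsem x a :
  taut_eval (fun c => `[< dsem f nu c x >]) a = `[< dsem f nu a x >].
Proof.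
elim: a => //= [a IHa b IHb|a IHa]; first by rewrite IHa IHb -asbool_and.
by rewrite IHa -asbool_neg.
Qed.

Lemma dsem_Imp x a b : dsem f nu (Imp a b) x <-> (dsem f nu a x -> dsem f nu b x).
Proof.
split=> /= h; first by move=> ha; apply: contrapT => hb; apply: h.
by move=> [ha hb]; apply/hb/h.
Qed.

Lemma dsem_Iff x a b :
  dsem f nu (Iff a b) x <-> (dsem f nu a x <-> dsem f nu b x).
Proof.
split=> [[/dsem_Imp h1 /dsem_Imp h2]|[h1 h2]]; first by split.
by split; apply/dsem_Imp.
Qed.

Lemma dsem_BoxE x a : dsem f nu (Box a) x <->
  exists2 B, nbhs x B & forall y, B y -> y <> x -> dsem f nu a y.
Proof.
split=> [hx|[B hB hBa] hd]; last first.
  by have [y [[hna hyx] hBy]] := hd B hB; exact/hna/hBa.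
apply: contrapT => hne; apply: hx => B hB; apply: contrapT => hBa.
apply: hne; exists B => // y hBy hyx; apply: contrapT => hna.
by apply: hBa; exists y.
Qed.
End DSemantics.

Theorem K4H_d_sound (X : topologicalType) (f : X -> X) :
  T_D_space X -> homeomorphism f -> forall a, K4H a -> d_valid f a.
Proof.
move=> hTD hf a; elim=> {a} [a ht|a b|a|a|a b|a|a b _ h1 _ h2|a _ h|a _ h] nu;
  apply/seteqP; split=> // x _.
- have := ht (fun c => `[< dsem f nu c x >]).
  by rewrite taut_eval_dsem => /asboolP.
- apply/dsem_Imp => hab; apply/dsem_Imp => ha hb.
  have hsub : ~` dsem f nu b `<=` ~` dsem f nu (Imp a b) `|` ~` dsem f nu a.
    move=> y hnb; case: (pselect (dsem f nu a y)) => hay; [left|by right].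
    by move=> /dsem_Imp hy; exact: hnb (hy hay).
  by case: (dsetU _ _ _ (dsetS hsub _ hb)); [exact: hab|exact: ha].
- by apply/dsem_Imp => hx; rewrite /= setCK => /(dset_dset_sub _ hTD).
- by apply/dsem_Iff.
- by apply/dsem_Iff.
- by apply/dsem_Iff; rewrite /= preimage_setC -dset_preimage // preimage_setC.
- have : dsem f nu (Imp a b) x by rewrite h1.
  by move/dsem_Imp; apply; rewrite h2.
- by rewrite /= h setCT dset0.
- by rewrite /= h.
Qed.

Definition kripke_space {W : choiceType} (R : W -> W -> Prop) : Type := (W * nat)%type.
HB.instance Definition _ {W : choiceType} (R : W -> W -> Prop) :=
  Choice.on (kripke_space R).

Definition kripke_ball {W : choiceType} (R : W -> W -> Prop) (k : nat)
    (x : kripke_space R) : set (kripke_space R) :=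
  [set y | y = x \/ (R x.1 y.1 /\ (k <= y.2)%N)].

Definition kripke_open {W : choiceType} (R : W -> W -> Prop) :
  set_system (kripke_space R) :=
  fun U => forall x, U x -> exists k, kripke_ball R k x `<=` U.

Lemma kripke_openT {W : choiceType} (R : W -> W -> Prop) : kripke_open R setT.
Proof. by move=> x _; exists 0%N. Qed.

Lemma kripke_openI {W : choiceType} (R : W -> W -> Prop) : setI_closed (kripke_open R).
Proof.
move=> A B hA hB x [/hA [k hk] /hB [j hj]]; exists (maxn k j) => y hy.
by split; [apply: hk|apply: hj]; case: hy => [->|[r l]]; [left|right|left|right];
  rewrite ?(leq_trans _ l) ?leq_maxl ?leq_maxr.
Qed.

Lemma kripke_open_bigcup {W : choiceType} (R : W -> W -> Prop) (I : Type)
    (F : I -> set (kripke_space R)) :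
  (forall i, kripke_open R (F i)) -> kripke_open R (\bigcup_i F i).
Proof. by move=> h x [i _ /(h i) [k hk]]; exists k => y /hk; exists i. Qed.

HB.instance Definition _ {W : choiceType} (R : W -> W -> Prop) :=
  isOpenTopological.Build (kripke_space R)
    (@kripke_openT W R) (@kripke_openI W R) (@kripke_open_bigcup W R).

Definition kripke_shift {W : choiceType} (R : W -> W -> Prop) (f : W -> W)
    (x : kripke_space R) : kripke_space R := (f x.1, x.2).

Section KripkeSpace.
Context {W : choiceType} {R : W -> W -> Prop}.
Hypothesis R_trans : forall u v w, R u v -> R v w -> R u w.

Lemma kripke_ball_open k x : kripke_open R (kripke_ball R k x).
Proof.
move=> y [->|[ry ly]]; exists k => z [->|[rz lz]]; [left|right|right|right] => //.
by split=> //; exact: R_trans ry rz.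
Qed.

Lemma kripke_openE (A : set (kripke_space R)) : open A = kripke_open R A.
Proof. by []. Qed.

Lemma kripke_nbhsE (x : kripke_space R) A :
  nbhs x A <-> exists k, kripke_ball R k x `<=` A.
Proof.
split=> [[B [hB hx hBA]]|[k hk]].
  by have [k hk] := hB x hx; exists k => y /hk /hBA.
by exists (kripke_ball R k x); split=> //; [exact: kripke_ball_open|left].
Qed.

Lemma kripke_space_T_D : T_D_space (kripke_space R).
Proof.
move=> x; exists (kripke_ball R 0 x), (~` [set y | y <> x /\ R x.1 y.1]).
split; first by rewrite kripke_openE; exact: kripke_ball_open.
split.
  apply: open_closedC; rewrite kripke_openE => y [hyx hry].
  exists x.2.+1 => z [->//|[rz lz]].
  by split; [move=> hzx; move: lz; rewrite hzx ltnn|exact: R_trans hry rz].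
apply/seteqP; split=> [z ->|z [[->//|[rz _]] hC]]; first by split; [left|case].
by apply: contrapT => hzx; exact: hC (conj hzx rz).
Qed.

Lemma kripke_shift_homeomorphism {f : W -> W} :
  bijective f -> (forall w v, R w v <-> R (f w) (f v)) ->
  homeomorphism (kripke_shift R f).
Proof.
move=> [g fK gK] hR; have Rg w v : R w v <-> R (g w) (g v) by rewrite (hR (g w)) !gK.
have cont h : (forall w v, R w v -> R (h w) (h v)) -> continuous (kripke_shift R h).
  move=> hh; apply/continuousP => A; rewrite !kripke_openE => hA y hy.
  have [k hk] := hA _ hy.
  by exists k => z [->//|[rz lz]]; apply: hk; right; split=> //=; apply: hh.
exists (kripke_shift R g); split.
- by move=> [w n]; rewrite /kripke_shift /= fK.
- by move=> [w n]; rewrite /kripke_shift /= gK.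
- by apply: cont => w v /hR.
- by apply: cont => w v /Rg.
Qed.

Lemma dsem_kripke_shift (f : W -> W) (V : nat -> W -> Prop) a (x : kripke_space R) :
  dsem (kripke_shift R f) (fun p y => V p y.1) a x <-> kripke_sat R f V x.1 a.
Proof.
elim: a x => [p|a IHa b IHb|a IHa|a IHa|a IHa] x /=.
- by [].
- by rewrite (IHa x) (IHb x).
- by rewrite (IHa x).
- apply: (iff_trans (dsem_BoxE x _)); split=> [[B /kripke_nbhsE [k hk] hBa] v hv|h].
    (* a point of the ball over [v] distinct from [x]: move far up in [nat] *)
    have hy : kripke_ball R k x (v, (k + x.2).+1).
      by right; rewrite /= ltnW ?ltnS ?leq_addr.
    apply/(IHa (v, _))/(hBa _ (hk _ hy)); case: x {hk hBa hy hv} => w n [_].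
    by move/(f_equal (subn^~ n)); rewrite -addSn addnK subnn.
  exists (kripke_ball R 0 x); first by apply/kripke_nbhsE; exists 0%N.
  by move=> y [->//|[ry _]] _; apply/IHa/h.
- exact: IHa.
Qed.

Lemma kripke_valid_of_d_valid (f : W -> W) a :
  d_valid (kripke_shift R f) a -> kripke_valid R f a.
Proof. by move=> h V w; apply/(dsem_kripke_shift f V a (w, 0%N)); rewrite h. Qed.
End KripkeSpace.

Theorem mainTheorem9 (phi : form) :
  (K4H phi <->
   (forall (W : finType) (R : W -> W -> Prop) (f : W -> W),
       inv_dyn_K4_frame R f -> kripke_valid R f phi))
  /\
  (K4H phi <->
   (forall (X : topologicalType) (f : X -> X),
       T_D_space X -> homeomorphism f -> d_valid f phi)).
Proof.
have kripke : K4H phi <-> (forall (W : finType) (R : W -> W -> Prop) (f : W -> W),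
    inv_dyn_K4_frame R f -> kripke_valid R f phi).
  split=> [h W R f hF|]; [exact: K4H_kripke_sound hF _ h|exact: K4H_complete_finite].
split=> //; split=> [h X f hTD hf|hd]; first exact: K4H_d_sound hTD hf _ h.
apply/kripke => W R f [_ [htr [hbij hR]]]; apply: (kripke_valid_of_d_valid htr).
exact: hd (kripke_space_T_D htr) (kripke_shift_homeomorphism hbij hR).
Qed.
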